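(* Let $\omega>0$, $\bar r>0$, $\bar v>0$ and $T>0$ be such that $e^{AT}\begin{bmatrix}-\bar r\\ \bar v\end{bmatrix}=\begin{bmatrix}\bar r\\ \bar v\end{bmatrix}$ with $A=\begin{bmatrix}0&1\\ \omega^2&0\end{bmatrix}$ (so that $\bar v/\omega-\bar r>0$ and $e^{\omega T}=\frac{\bar v/\omega+\bar r}{\bar v/\omega-\bar r}$). For $\varepsilon_p\in\mathbb R$ define $$\eta(\varepsilon_p)=\frac{\varepsilon_p-\bar r+\sqrt{\varepsilon_p^2-2\bar r\varepsilon_p+(\bar v/\omega)^2}}{\bar v/\omega-\bar r},\quad \delta_1(\varepsilon_p)=\bar r\Big(\eta(\varepsilon_p)+\tfrac1{\eta(\varepsilon_p)}-2\Big),\quad \delta_2(\varepsilon_p)=\bar r\omega\Big(\tfrac1{\eta(\varepsilon_p)}-\eta(\varepsilon_p)\Big),$$ $\varepsilon_p^+=\varepsilon_p+\delta_1(\varepsilon_p)$, $\delta_\alpha(\varepsilon_p)=e^{-2\alpha T}\varepsilon_p^+-\varepsilon_p$, and $\xi=\dfrac{\bar r\omega}{\bar v/\omega-\bar r}$. Then for all $\varepsilon_p\in\mathbb R$, $$|\delta_1(\varepsilon_p)|\le\frac{2\xi}{\omega}|\varepsilon_p|,\qquad |\delta_2(\varepsilon_p)|\le 2\xi|\varepsilon_p|,$$ and, for every $\alpha>\omega$, $$|\delta_\alpha(\varepsilon_p)|\le\big(1-e^{-(\omega+2\alpha)T}\big)|\varepsilon_p|.$$ *)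

From HB Require Import structures.
From mathcomp Require Import all_boot all_order all_algebra.
From mathcomp Require Import all_classical all_reals all_analysis.
Set Implicit Arguments. Unset Strict Implicit. Unset Printing Implicit Defensive.
Import Order.TTheory GRing.Theory Num.Theory.
Import numFieldNormedType.Exports.
Local Open Scope ring_scope.

Definition mexp (R : realType) (n : nat) (A : 'M[R]_n.+1) : 'M[R]_n.+1 :=
  \matrix_(i, j) limn (series (fun k : nat => (((k`!%:R)^-1 *: A ^+ k) i j : R))).

Definition col2 (R : realType) (a b : R) : 'cV[R]_2 :=
  \col_(i < 2) (if i == 0 then a else b).

Definition Amat (R : realType) (w : R) : 'M[R]_2 :=
  \matrix_(i < 2, j < 2)
    (if (i == 0) && (j == 1) then 1
     else if (i == 1) && (j == 0) then w ^+ 2 else 0).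

Section Quantities.
Variables (R : realType) (w rb vb T : R).

Definition eta (e : R) : R :=
  (e - rb + Num.sqrt (e ^+ 2 - 2 * rb * e + (vb / w) ^+ 2)) / (vb / w - rb).
Definition delta1 (e : R) : R := rb * (eta e + (eta e)^-1 - 2).
Definition delta2 (e : R) : R := rb * w * ((eta e)^-1 - eta e).
Definition eps_plus (e : R) : R := e + delta1 e.
Definition delta_alpha (a e : R) : R := expR (- (2 * a * T)) * eps_plus e - e.
Definition xi : R := rb * w / (vb / w - rb).
End Quantities.

(* Write c = vb/w and rho = e^(wT).  Since e^(TA) = e^(wT) P + e^(-wT) Q with
   P, Q the spectral projectors of A, the first row of the boundary condition
   reads (c - rb) rho = c + rb.  eta(e) is the positive root of
   (c - rb) x^2 - 2 (e - rb) x = c + rb, i.e. 2e = c u - rb g with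
   u = eta - 1/eta and g = eta + 1/eta - 2 = (eta - 1)^2 / eta.  As 0 <= g <= |u|,
   u has the sign of e and (c - rb) |u| <= 2 |e|; this bounds delta1 = rb g and
   delta2 = - rb w u.  The same facts give e <= e+ <= rho e for e >= 0 and
   rho e+ <= e for e < 0, whence |k e+ - e| <= (1 - k / rho) |e| for
   k = e^(-2 a T) <= 1 / rho. *)

From Pilot Require Import Defs.
From mathcomp Require Import all_boot all_order all_algebra.
From mathcomp Require Import all_classical all_reals all_analysis.
From mathcomp Require Import ring lra.
Import Order.TTheory GRing.Theory Num.Theory.
Import numFieldNormedType.Exports.
Set Implicit Arguments. Unset Strict Implicit.
Local Open Scope ring_scope.

Section MatrixExponential.
Variables (R : realType) (w : R).
Hypothesis w_neq0 : w != 0.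

(* [Aeig w 1 / 2] and [Aeig w (-1) / 2] are the spectral projectors of
   [Amat w] onto its eigenvalues [w] and [-w]. *)
Definition Aeig (s : R) : 'M[R]_2 :=
  \matrix_(i < 2, j < 2) (if i == j then 1 else if i == 0 then s / w else s * w).

Lemma Amat_scale_pow (T : R) k :
  (T *: Amat w) ^+ k =
  ((T * w) ^+ k / 2) *: Aeig 1 + ((- (T * w)) ^+ k / 2) *: Aeig (-1).
Proof.
elim: k => [|k IHk]; apply/matrixP => i j.
  by rewrite !expr0 !mxE; case: i j => [[|[|i]] ?] [[|[|j]] ?] //=; field.
rewrite exprSr IHk !mxE !big_ord_recl big_ord0 !mxE /=.
by case: i j => [[|[|i]] ?] [[|[|j]] ?] //=; rewrite !exprS ?expr0; field.
Qed.

Lemma mexp_Amat (T : R) :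
  mexp (T *: Amat w) =
  (expR (T * w) / 2) *: Aeig 1 + (expR (- (T * w)) / 2) *: Aeig (-1).
Proof.
apply/matrixP => i j; rewrite !mxE.
have scaleE (a b : R) : a *: b = a * b by [].
have -> : (fun k => (((k`!%:R)^-1 *: (T *: Amat w) ^+ k) i j : R)) =
    (Aeig 1 i j / 2) *: exp_coeff (T * w) + (Aeig (-1) i j / 2) *: exp_coeff (- (T * w)).
  apply/funext => k; rewrite Amat_scale_pow !mxE !fctE /exp_coeff /=.
  by rewrite !scaleE; ring.
have cvg_exp (x : R) : cvgn (series (exp_coeff x)) := is_cvg_series_exp_coeff x.
rewrite lim_seriesD; try exact: is_cvg_seriesZ.
by rewrite !lim_seriesZ // !scaleE !mxE -!/(expR _); ring.
Qed.

Lemma mexp_Amat_boundary (rb vb T : R) :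
  mexp (T *: Amat w) *m col2 (- rb) vb = col2 rb vb ->
  (vb / w - rb) * expR (T * w) = vb / w + rb.
Proof.
move=> /(congr1 (fun X : 'M[R]_(2, 1) => X 0 0)).
rewrite mexp_Amat !mxE big_ord_recl big_ord1 !mxE /= expRN.
set ex := expR (T * w).
have ex_gt0 : 0 < ex := expR_gt0 _.
have ex1_neq0 : ex + 1 != 0 by rewrite lt0r_neq0 // addr_gt0.
(* Times [2 ex], the first row is [(ex + 1) ((vb / w - rb) ex - (vb / w + rb)) = 0]. *)
move=> /(congr1 (fun y => 2 * ex * (y - rb))); rewrite subrr mulr0 => row0.
apply/eqP; rewrite -subr_eq0 -(mulrI_eq0 _ (lregP ex1_neq0)).
by apply/eqP; rewrite -row0; field; rewrite w_neq0 lt0r_neq0.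
Qed.

End MatrixExponential.

Lemma add_inv_sub2_ge0 (R : realFieldType) (x : R) : 0 < x -> 0 <= x + x^-1 - 2.
Proof.
move=> x_gt0; have -> : x + x^-1 - 2 = (x - 1) ^+ 2 / x by field; rewrite lt0r_neq0.
by rewrite divr_ge0 ?sqr_ge0 ?ltW.
Qed.

Lemma add_inv_sub2_le_norm (R : realFieldType) (x : R) :
  0 < x -> x + x^-1 - 2 <= `|x - x^-1|.
Proof.
move=> x_gt0; have [x_ge1|x_lt1] := lerP 1 x.
  have : x^-1 <= 1 by rewrite invf_le1.
  by move=> xV_le1; rewrite ger0_norm; lra.
have : 1 < x^-1 by rewrite invf_gt1.
by move=> xV_gt1; rewrite ltr0_norm; lra.
Qed.

Section Eta.
Variables (R : realType) (w rb vb : R).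
Local Notation c := (vb / w).
Local Notation eta := (Defs.eta w rb vb).

Lemma eta_gt0 e : 0 < rb -> rb < c -> 0 < eta e.
Proof.
move=> rb_gt0 rb_lt; rewrite /Defs.eta divr_gt0 ?subr_gt0 //.
have -> : e ^+ 2 - 2 * rb * e + c ^+ 2 = (e - rb) ^+ 2 + (c ^+ 2 - rb ^+ 2) by ring.
have c2_rb2 : 0 < c ^+ 2 - rb ^+ 2 by rewrite subr_sqr mulr_gt0 //; lra.
have norm_lt : `|e - rb| < Num.sqrt ((e - rb) ^+ 2 + (c ^+ 2 - rb ^+ 2)).
  by rewrite -sqrtr_sqr ltr_sqrt ?ltrDl // ltr_wpDl ?sqr_ge0.
have := ler_norm (rb - e); rewrite distrC; lra.
Qed.

Lemma eta_root e : 0 < rb -> rb < c ->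
  (c - rb) * eta e ^+ 2 - 2 * (e - rb) * eta e = c + rb.
Proof.
move=> rb_gt0 rb_lt; have c_rb_gt0 : 0 < c - rb by rewrite subr_gt0.
set s := Num.sqrt (e ^+ 2 - 2 * rb * e + c ^+ 2).
have s2 : s ^+ 2 = e ^+ 2 - 2 * rb * e + c ^+ 2.
  rewrite sqr_sqrtr // (_ : _ + _ = (e - rb) ^+ 2 + (c - rb) * (c + rb)); last by ring.
  by rewrite addr_ge0 ?sqr_ge0 // mulr_ge0 //; lra.
have eta_s : (c - rb) * eta e = e - rb + s by rewrite /Defs.eta -/s mulrC divfK ?lt0r_neq0.
apply: (mulfI (lt0r_neq0 c_rb_gt0)).
have -> : (c - rb) * ((c - rb) * eta e ^+ 2 - 2 * (e - rb) * eta e) =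
  ((c - rb) * eta e) ^+ 2 - 2 * (e - rb) * ((c - rb) * eta e) by ring.
by rewrite eta_s; nra.
Qed.

Lemma eps_of_eta e : 0 < rb -> rb < c ->
  2 * e = c * (eta e - (eta e)^-1) - rb * (eta e + (eta e)^-1 - 2).
Proof.
move=> rb_gt0 rb_lt; have := eta_root e rb_gt0 rb_lt.
have := lt0r_neq0 (eta_gt0 e rb_gt0 rb_lt); set x := eta e => x_neq0 root.
set c := vb / w in root *; apply: (mulIf x_neq0).
have -> : (c * (x - x^-1) - rb * (x + x^-1 - 2)) * x =
  (c - rb) * x ^+ 2 + 2 * rb * x - (c + rb) by field.
by rewrite -root; ring.
Qed.

Lemma eta_sub_inv_ge0 e : 0 < rb -> rb < c ->
  (0 <= eta e - (eta e)^-1) = (0 <= e).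
Proof.
move=> rb_gt0 rb_lt; have := eps_of_eta e rb_gt0 rb_lt.
have := eta_gt0 e rb_gt0 rb_lt; set x := eta e => x_gt0 spec.
have g_ge0 := add_inv_sub2_ge0 x_gt0; have g_le := add_inv_sub2_le_norm x_gt0.
have c_gt0 : 0 < c by lra.
apply/idP/idP => [u_ge0|e_ge0].
  by rewrite ger0_norm // in g_le; nra.
by rewrite leNgt; apply/negP => u_lt0; nra.
Qed.

Lemma norm_eta_sub_inv_le e : 0 < rb -> rb < c ->
  (c - rb) * `|eta e - (eta e)^-1| <= 2 * `|e|.
Proof.
move=> rb_gt0 rb_lt; have := eta_sub_inv_ge0 e rb_gt0 rb_lt.
have := eps_of_eta e rb_gt0 rb_lt.
have := eta_gt0 e rb_gt0 rb_lt; set x := eta e => x_gt0 spec sign.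
have g_ge0 := add_inv_sub2_ge0 x_gt0; have g_le := add_inv_sub2_le_norm x_gt0.
have [e_ge0|e_lt0] := lerP 0 e.
  have u_ge0 : 0 <= x - x^-1 by rewrite sign.
  by rewrite !ger0_norm // in g_le *; nra.
have u_lt0 : x - x^-1 < 0 by rewrite ltNge sign -ltNge.
by rewrite !ltr0_norm //; nra.
Qed.

Lemma norm_delta1_le e : w != 0 -> 0 < rb -> rb < c ->
  `|delta1 w rb vb e| <= 2 * xi w rb vb / w * `|e|.
Proof.
move=> w_neq0 rb_gt0 rb_lt; have c_rb_gt0 : 0 < c - rb by rewrite subr_gt0.
have x_gt0 := eta_gt0 e rb_gt0 rb_lt.
rewrite /delta1 /xi ger0_norm ?mulr_ge0 ?add_inv_sub2_ge0 ?(ltW rb_gt0) //.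
have -> : 2 * (rb * w / (c - rb)) / w * `|e| = rb * (2 * `|e| / (c - rb)).
  by set d := c - rb in c_rb_gt0 *; field; rewrite w_neq0 lt0r_neq0.
rewrite ler_wpM2l ?(ltW rb_gt0) // ler_pdivlMr // mulrC.
rewrite (le_trans _ (norm_eta_sub_inv_le e rb_gt0 rb_lt)) //.
by rewrite ler_wpM2l ?(ltW c_rb_gt0) ?add_inv_sub2_le_norm.
Qed.

Lemma norm_delta2_le e : 0 < w -> 0 < rb -> rb < c ->
  `|delta2 w rb vb e| <= 2 * xi w rb vb * `|e|.
Proof.
move=> w_gt0 rb_gt0 rb_lt; have c_rb_gt0 : 0 < c - rb by rewrite subr_gt0.
rewrite /delta2 /xi normrM ger0_norm ?mulr_ge0 ?(ltW rb_gt0) ?(ltW w_gt0) // distrC.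
have -> : 2 * (rb * w / (c - rb)) * `|e| = rb * w * (2 * `|e| / (c - rb)).
  by set d := c - rb in c_rb_gt0 *; field; rewrite lt0r_neq0.
rewrite ler_wpM2l ?mulr_ge0 ?(ltW rb_gt0) ?(ltW w_gt0) // ler_pdivlMr // mulrC.
exact: norm_eta_sub_inv_le.
Qed.

Lemma eps_plus_ge e : 0 < rb -> rb < c -> e <= eps_plus w rb vb e.
Proof.
move=> rb_gt0 rb_lt; rewrite /eps_plus /delta1 lerDl.
by rewrite mulr_ge0 ?(ltW rb_gt0) ?add_inv_sub2_ge0 ?eta_gt0.
Qed.

Lemma eps_plus_le_mul e rho : 0 < rb -> rb < c -> (c - rb) * rho = c + rb ->
  0 <= e -> eps_plus w rb vb e <= rho * e.
Proof.
move=> rb_gt0 rb_lt rho_eq e_ge0; have c_rb_gt0 : 0 < c - rb by rewrite subr_gt0.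
have x_gt0 := eta_gt0 e rb_gt0 rb_lt.
have g_le : (c - rb) * (eta e + (eta e)^-1 - 2) <= 2 * e.
  have := norm_eta_sub_inv_le e rb_gt0 rb_lt; rewrite (ger0_norm e_ge0).
  by apply: le_trans; rewrite ler_wpM2l ?(ltW c_rb_gt0) ?add_inv_sub2_le_norm.
rewrite -(ler_pM2l c_rb_gt0) mulrA rho_eq /eps_plus /delta1; nra.
Qed.

Lemma mul_eps_plus_le e rho : 0 < rb -> rb < c -> (c - rb) * rho = c + rb ->
  e < 0 -> rho * eps_plus w rb vb e <= e.
Proof.
move=> rb_gt0 rb_lt rho_eq e_lt0; have c_rb_gt0 : 0 < c - rb by rewrite subr_gt0.
have := eps_of_eta e rb_gt0 rb_lt.
have := eta_gt0 e rb_gt0 rb_lt; set x := eta e => x_gt0 spec.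
have u_lt0 : x - x^-1 < 0 by rewrite ltNge eta_sub_inv_ge0 -?ltNge.
have := add_inv_sub2_le_norm x_gt0; rewrite ltr0_norm // => g_le.
have g_le_e : (c + rb) * (x + x^-1 - 2) <= - (2 * e) by nra.
rewrite -(ler_pM2l c_rb_gt0) mulrA mulrC rho_eq /eps_plus /delta1 -/x; nra.
Qed.

End Eta.

Lemma norm_contract_le (R : realFieldType) (k rho e p : R) :
  0 <= k -> 1 <= rho -> k * rho <= 1 -> e <= p ->
  (0 <= e -> p <= rho * e) -> (e < 0 -> rho * p <= e) ->
  `|k * p - e| <= (1 - k / rho) * `|e|.
Proof.
move=> k_ge0 rho_ge1 k_rho_le1 e_le_p p_le p_ge.
have rho_gt0 : 0 < rho by lra.
have k_le1 : k <= 1 by nra.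
have kV_le : k / rho <= k by rewrite ler_pdivrMr //; nra.
have kV_ge0 : 0 <= k / rho by rewrite divr_ge0 ?(ltW rho_gt0).
have k_p_ge : k * e <= k * p by rewrite ler_wpM2l.
have [e_ge0|e_lt0] := lerP 0 e.
  have := p_le e_ge0 => {}p_le; rewrite (ger0_norm e_ge0) ler_norml; apply/andP; split; nra.
have p_le_e : p <= e / rho by rewrite ler_pdivlMr // mulrC p_ge.
rewrite (ltr0_norm e_lt0) ler_norml; apply/andP; split; nra.
Qed.

Theorem lemma2 (R : realType) (w rb vb T : R)
  (hw : 0 < w) (hr : 0 < rb) (hv : 0 < vb) (hT : 0 < T)
  (hexp : mexp (T *: Amat w) *m col2 (- rb) vb = col2 rb vb) :
  forall e : R,
    `|delta1 w rb vb e| <= 2 * xi w rb vb / w * `|e| /\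
    `|delta2 w rb vb e| <= 2 * xi w rb vb * `|e| /\
    (forall a : R, w < a ->
       `|delta_alpha w rb vb T a e| <= (1 - expR (- ((w + 2 * a) * T))) * `|e|).
Proof.
move=> e; have w_neq0 := lt0r_neq0 hw.
have bc := mexp_Amat_boundary w_neq0 hexp.
have rb_lt : rb < vb / w.
  by rewrite -subr_gt0 -(pmulr_lgt0 _ (expR_gt0 (T * w))) bc addr_gt0 ?divr_gt0.
split; first exact: norm_delta1_le.
split; first exact: norm_delta2_le.
move=> a w_lt_a.
have -> : expR (- ((w + 2 * a) * T)) = expR (- (2 * a * T)) / expR (T * w).
  by rewrite -expRN -expRD; congr expR; ring.
apply: norm_contract_le.
- exact: expR_ge0.
- by rewrite -expR0 ler_expR mulr_ge0 ?(ltW hT) ?(ltW hw).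
- by rewrite -expRD expR_le1; nra.
- exact: eps_plus_ge.
- exact: eps_plus_le_mul.
- exact: mul_eps_plus_le.
Qed.
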